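(* Let $T$ and $Q$ be selfadjoint bounded operators on a Hilbert space $V$, with $Q$ nonnegative, and let $A:=Q(I+iT)^{-1}$. Then the Cayley transform $C=(I-A)(I+A)^{-1}=(I-Q+iT)(I+Q+iT)^{-1}$ of $A$ is a Ritt operator.
   Context: A bounded operator $C$ is a Ritt operator if $\sigma(C)\subseteq\mathbb{D}\cup\{1\}$, where $\mathbb{D}$ is the open unit disc, and $\sup_{|z|>1}\|(z-1)(z-C)^{-1}\|<\infty$. *)

From HB Require Import structures.
From mathcomp Require Import all_boot all_order all_algebra.
From mathcomp Require Import complex.
From mathcomp Require Import reals.
Set Implicit Arguments. Unset Strict Implicit. Unset Printing Implicit Defensive.
Import Order.TTheory GRing.Theory Num.Theory.
Local Open Scope ring_scope.

Section Hilbert.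
Variables (R : realType) (V : lmodType R[i]) (ip : V -> V -> R[i]).

Definition hnorm (x : V) : R := Num.sqrt (complex.Re (ip x x)).

Definition is_hilbert : Prop :=
  [/\ forall (a : R[i]) (x y z : V), ip (a *: x + y) z = a * ip x z + ip y z,
      forall x y : V, ip y x = conjc (ip x y),
      forall x : V, 0 <= ip x x,
      forall x : V, ip x x = 0 -> x = 0
    & forall u : nat -> V,
        (forall e : R, 0 < e -> exists N : nat, forall m n : nat,
            (N <= m)%N -> (N <= n)%N -> hnorm (u m - u n) < e) ->
        exists l : V, forall e : R, 0 < e -> exists N : nat, forall n : nat,
            (N <= n)%N -> hnorm (u n - l) < e].

Definition bounded_op (f : V -> V) : Prop :=
  (forall (a : R[i]) (x y : V), f (a *: x + y) = a *: f x + f y) /\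
  exists M : R, forall x : V, hnorm (f x) <= M * hnorm x.

Definition is_inverse_op (f g : V -> V) : Prop :=
  bounded_op g /\ (forall x, g (f x) = x) /\ (forall x, f (g x) = x).

Definition invertible_op (f : V -> V) : Prop := exists g, is_inverse_op f g.

Definition selfadjoint (f : V -> V) : Prop := forall x y, ip (f x) y = ip x (f y).

Definition nonneg_op (f : V -> V) : Prop := forall x, 0 <= ip (f x) x.

(* Ritt operator: sigma(C) is contained in D cup {1}, and
   sup_{|z|>1} || (z-1) (z-C)^{-1} || < oo *)
Definition ritt (Cop : V -> V) : Prop :=
  bounded_op Cop /\
  (forall z : R[i], ~ (`|z| < 1) -> z != 1 -> invertible_op (fun x => z *: x - Cop x)) /\
  exists M : R, forall z : R[i], 1 < `|z| ->
    forall Rz : V -> V, is_inverse_op (fun x => z *: x - Cop x) Rz ->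
    forall x : V, hnorm ((z - 1) *: Rz x) <= M * hnorm x.

End Hilbert.

(* Write D := I + Q + iT.  Since I + A = D (I + iT)^-1, the two formulas for the Cayley
   transform agree and C = (I - Q + iT) D^-1.  For z <> 1 put w := (z + 1) / (z - 1); then
   z - C = (z - 1) (I + iT + wQ) D^-1, and Re w >= 0 as soon as |z| >= 1.
   An operator B with Re <Bx, x> >= |x|^2 is invertible with |B^-1| <= 1: the lower bound
   |x| <= |Bx| gives injectivity, and B is onto because x |-> x - t (Bx - y) is a contraction
   for small t > 0.  Hence (z - 1) (z - C)^-1 = D (I + iT + wQ)^-1, which is bounded
   uniformly in w: writing y = (I + iT + wQ) x, the term Q x is controlled by |Q| when
   |w| <= 1 and by w Q x = y - (I + iT) x when |w| > 1. *)

From HB Require Import structures.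
From mathcomp Require Import all_boot all_order all_algebra.
From mathcomp Require Import complex.
From mathcomp Require Import reals.
From Stdlib Require Import IndefiniteDescription FunctionalExtensionality.
From mathcomp Require Import ring lra.
Import Order.TTheory GRing.Theory Num.Theory.
Local Open Scope ring_scope.
Local Open Scope complex_scope.
Set Implicit Arguments. Unset Strict Implicit. Unset Printing Implicit Defensive.

(* [Num.Theory] also exports a [Re]. *)
Local Notation Re := complex.Re.

Lemma ler_Bernoulli (R : realDomainType) (h : R) n :
  0 <= h -> 1 + n%:R * h <= (1 + h) ^+ n.
Proof.
move=> h0; elim: n => [|n IH]; first by rewrite mul0r addr0 expr0.
have hn : 0 <= n%:R * h * h by rewrite !mulr_ge0 ?ler0n.
have h1 : 0 <= 1 + h by rewrite addr_ge0.
rewrite exprS -natr1 mulrDl mul1r; apply: le_trans (ler_wpM2l h1 IH); nra.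
Qed.

Lemma exprn_lt_eps (R : archiRealFieldType) (q e : R) :
  0 <= q -> q < 1 -> 0 < e -> exists N : nat, q ^+ N < e.
Proof.
move=> q0 q1 e0; have [->|qn0] := eqVneq q 0; first by exists 1%N; rewrite expr1.
have qp : 0 < q by rewrite lt_def qn0.
set h := q^-1 - 1; have h0 : 0 < h by rewrite subr_gt0 invf_gt1.
pose N := Num.bound (e * h)^-1; exists N.
have hN : (e * h)^-1 < N%:R by apply: archi_boundP; rewrite invr_ge0 ltW ?mulr_gt0.
have eN : e^-1 < N%:R * h by rewrite -ltr_pdivrMr // -invfM.
have := ler_Bernoulli N (ltW h0).
have -> : 1 + h = q^-1 by rewrite /h addrC subrK.
rewrite exprVn => qN.
rewrite -[e]invrK -[q ^+ N]invrK ltf_pV2 ?posrE ?invr_gt0 ?exprn_gt0 //; lra.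
Qed.

Lemma normc_ge1 (R : rcfType) (z : R[i]) : ~ (`|z| < 1) -> 1 <= Normc.normc z.
Proof. by case: z => a b; rewrite normc_def ltcR leNgt => /negP. Qed.

Lemma normc_gt1 (R : rcfType) (z : R[i]) : 1 < `|z| -> 1 < Normc.normc z.
Proof. by case: z => a b; rewrite normc_def ltcR. Qed.

Lemma normc_gt1_neq1 (R : rcfType) (z : R[i]) : 1 < Normc.normc z -> z != 1.
Proof. by apply: contraTneq => ->; rewrite Normc.normc1 ltxx. Qed.

Lemma Re_divDB_ge0 (R : rcfType) (z : R[i]) :
  1 <= Normc.normc z -> 0 <= Re ((z + 1) / (z - 1)).
Proof.
case: z => a b /= z1.
have {}z1 : 1 <= a ^+ 2 + b ^+ 2.
  by move: z1; rewrite -[X in X <= _]sqrtr1 ler_sqrt // addr_ge0 ?sqr_ge0.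
rewrite subr0 addr0 mulrN opprK !mulrA -mulrDl.
by apply: divr_ge0; [nra | rewrite addr_ge0 ?sqr_ge0].
Qed.

Lemma scale_cayleyE (K : pzRingType) (W : lmodType K) (z : K) (a b c : W) :
  z *: (a + b + c) - (a - b + c) = (z - 1) *: (a + c) + (z + 1) *: b.
Proof.
rewrite !scalerBl !scalerDl !scale1r !scalerDr !opprD !opprK !addrA.
by rewrite (ACl (1*3*4*6*2*5)).
Qed.

Section InnerProductSpace.
Variables (R : realType) (V : lmodType R[i]) (ip : V -> V -> R[i]).
Hypothesis HV : is_hilbert ip.
Local Notation nrm := (hnorm ip).
Local Notation hnorm2 x := (Re (ip x x)).

Lemma ipDZl a x y z : ip (a *: x + y) z = a * ip x z + ip y z.
Proof. by case: HV. Qed.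

Lemma ipC x y : ip y x = conjc (ip x y).
Proof. by case: HV. Qed.

Lemma ip0l z : ip 0 z = 0.
Proof.
by apply: (@addrI _ (1 * ip 0 z)); rewrite -ipDZl scaler0 !addr0 mul1r.
Qed.

Lemma ipDl x y z : ip (x + y) z = ip x z + ip y z.
Proof. by rewrite -[x]scale1r ipDZl mul1r scale1r. Qed.

Lemma ipZl a x z : ip (a *: x) z = a * ip x z.
Proof. by rewrite -[a *: x]addr0 ipDZl ip0l addr0. Qed.

Lemma ipNl x z : ip (- x) z = - ip x z.
Proof. by rewrite -scaleN1r ipZl mulN1r. Qed.

Lemma ipDr x y z : ip z (x + y) = ip z x + ip z y.
Proof. by rewrite ipC ipDl rmorphD /= -!ipC. Qed.

Lemma ipZr a x z : ip z (a *: x) = conjc a * ip z x.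
Proof. by rewrite ipC ipZl rmorphM /= -ipC. Qed.

Lemma ipNr x z : ip z (- x) = - ip z x.
Proof. by rewrite ipC ipNl rmorphN /= -ipC. Qed.

Lemma ip0r z : ip z 0 = 0.
Proof. by rewrite ipC ip0l conjc0. Qed.

Lemma ipxxE x : ip x x = (hnorm2 x)%:C.
Proof.
by case: HV => _ _ /(_ x); case: (ip x x) => a b; rewrite lecE /= => /andP[/eqP ->].
Qed.

Lemma hnorm2_ge0 x : 0 <= hnorm2 x.
Proof. by case: HV => _ _ /(_ x); rewrite ipxxE lecR. Qed.

Lemma Re_ipC x y : Re (ip y x) = Re (ip x y).
Proof. by rewrite ipC; case: (ip x y). Qed.

Lemma hnorm2D x y : hnorm2 (x + y) = hnorm2 x + hnorm2 y + 2 * Re (ip x y).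
Proof. by rewrite ipDl !ipDr !raddfD /= (Re_ipC y x); ring. Qed.

Lemma hnorm2Z a x : hnorm2 (a *: x) = Normc.normc a ^+ 2 * hnorm2 x.
Proof.
rewrite ipZl ipZr mulrA ipxxE.
by case: a => p q /=; rewrite sqr_sqrtr ?addr_ge0 ?sqr_ge0 //; ring.
Qed.

Lemma hnorm2_subZ (t : R) v w :
  hnorm2 (v - t%:C *: w) = hnorm2 v - 2 * t * Re (ip w v) + t ^+ 2 * hnorm2 w.
Proof.
rewrite hnorm2D ipNl !ipNr opprK hnorm2Z ipZr conjc_real (Re_ipC v w) /=.
rewrite expr0n addr0 sqr_sqrtr ?sqr_ge0 //.
by case: (ip v w) => a b /=; ring.
Qed.

Lemma hnorm_ge0 x : 0 <= nrm x.
Proof. exact: sqrtr_ge0. Qed.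

Lemma hnorm_sqr x : nrm x ^+ 2 = hnorm2 x.
Proof. by rewrite sqr_sqrtr ?hnorm2_ge0. Qed.

Lemma hnorm0 : nrm 0 = 0.
Proof. by rewrite /hnorm ip0l sqrtr0. Qed.

Lemma hnorm_eq0 x : nrm x = 0 -> x = 0.
Proof.
case: HV => _ _ _ ip_eq0 _ nx0; apply: ip_eq0.
by rewrite ipxxE -hnorm_sqr nx0 expr0n.
Qed.

Lemma hnormZ a x : nrm (a *: x) = Normc.normc a * nrm x.
Proof.
rewrite /hnorm hnorm2Z sqrtrM ?sqr_ge0 // sqrtr_sqr ger0_norm //.
by case: a => p q; apply: sqrtr_ge0.
Qed.

Lemma hnormN x : nrm (- x) = nrm x.
Proof. by rewrite -scaleN1r hnormZ normcN Normc.normc1 mul1r. Qed.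

Lemma hnormB x y : nrm (x - y) = nrm (y - x).
Proof. by rewrite -hnormN opprB. Qed.

Lemma Re_ip_le x y : Re (ip x y) <= nrm x * nrm y.
Proof.
have [/hnorm_eq0 ->|nx0] := eqVneq (nrm x) 0; first by rewrite ip0l hnorm0 mul0r.
have [/hnorm_eq0 ->|ny0] := eqVneq (nrm y) 0; first by rewrite ip0r hnorm0 mulr0.
have := hnorm2_ge0 ((nrm y)%:C *: x - (nrm x)%:C *: y).
rewrite hnorm2D ipNl !ipNr opprK !hnorm2Z ipZl ipZr conjc_real /= !expr0n !addr0 !sqrtr_sqr.
rewrite !ger0_norm ?hnorm_ge0 // -!hnorm_sqr.
have -> : Re (- ((nrm y)%:C * ((nrm x)%:C * ip x y))) = - (nrm y * nrm x) * Re (ip x y).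
  by case: (ip x y) => u v /=; ring.
have xy0 : 0 < nrm x * nrm y by rewrite mulr_gt0 // lt_def ?nx0 ?ny0 hnorm_ge0.
by move=> h; rewrite -(ler_pM2l xy0); nra.
Qed.

Lemma hnormD x y : nrm (x + y) <= nrm x + nrm y.
Proof.
rewrite -[nrm x + nrm y]ger0_norm ?addr_ge0 ?hnorm_ge0 // -sqrtr_sqr ler_sqrt ?sqr_ge0 //.
rewrite hnorm2D -!hnorm_sqr; have := Re_ip_le x y; nra.
Qed.

Lemma hnorm_sub_tri x y z : nrm (x - z) <= nrm (x - y) + nrm (y - z).
Proof. by rewrite -[x - z](subrKA y); exact: hnormD. Qed.

Lemma hnorm_le_eps_eq0 x : (forall e : R, 0 < e -> nrm x <= e) -> x = 0.
Proof.
move=> small; apply: hnorm_eq0; apply/eqP; rewrite eq_le hnorm_ge0 andbT leNgt.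
by apply/negP => nx0; have := small _ (divr_gt0 nx0 (ltr0Sn _ 1)); lra.
Qed.

Section Contraction.
Variables (F : V -> V) (q : R).
Hypotheses (q_ge0 : 0 <= q) (q_lt1 : q < 1)
  (F_contr : forall x y, nrm (F x - F y) <= q * nrm (x - y)).

Lemma contraction_dist x y : (1 - q) * nrm (x - y) <= nrm (F x - x) + nrm (F y - y).
Proof.
have := hnorm_sub_tri x (F x) y; have := hnorm_sub_tri (F x) (F y) y.
by rewrite (hnormB x (F x)); have := F_contr x y; lra.
Qed.

Let u n := iter n F 0.

Lemma contraction_iter_step n : nrm (F (u n) - u n) <= q ^+ n * nrm (F 0).
Proof.
elim: n => [|n IH]; first by rewrite expr0 mul1r subr0.
apply: le_trans (F_contr _ _) _; rewrite exprS -mulrA; exact: ler_wpM2l.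
Qed.

Lemma contraction_iter_cauchy (e : R) : 0 < e -> exists N : nat,
  forall m n : nat, (N <= m)%N -> (N <= n)%N -> nrm (u m - u n) < e.
Proof.
move=> e0; set d := nrm (F 0); have d0 : 0 <= d := hnorm_ge0 _.
have e1 : 0 < e * (1 - q) / (2 * d + 1).
  by rewrite divr_gt0 ?mulr_gt0 ?subr_gt0 //; lra.
have [N qN] := exprn_lt_eps q_ge0 q_lt1 e1; exists N => m n Nm Nn.
have qm : q ^+ m * d <= q ^+ N * d by rewrite ler_wpM2r // ler_wiXn2l // ltW.
have qn : q ^+ n * d <= q ^+ N * d by rewrite ler_wpM2r // ler_wiXn2l // ltW.
have qd : q ^+ N * (2 * d) <= q ^+ N * (2 * d + 1) by rewrite ler_wpM2l ?exprn_ge0 ?lerDl.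
have q1 : 0 < 1 - q by rewrite subr_gt0.
rewrite -(ltr_pM2l q1) [_ * e]mulrC.
move: qN; rewrite ltr_pdivlMr ?ltr_wpDl ?mulr_ge0 // => qN.
have := contraction_dist (u m) (u n).
have := contraction_iter_step m; have := contraction_iter_step n.
rewrite -/d; lra.
Qed.

Lemma contraction_fixpoint : exists x, F x = x.
Proof.
case: HV => _ _ _ _ /(_ u contraction_iter_cauchy) [l ul]; exists l.
apply/eqP; rewrite -subr_eq0; apply/eqP; apply: hnorm_le_eps_eq0 => e e0.
have [N uN] := ul _ (divr_gt0 e0 (ltr0Sn _ 1)).
have := uN N (leqnn N); have := uN N.+1 (leqnSn N); rewrite /= -/(u N) => uN1 uN0.
have := hnorm_sub_tri (F l) (F (u N)) l; have := F_contr l (u N).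
rewrite hnormB in uN0.
have : q * nrm (l - u N) <= nrm (l - u N) by rewrite ler_piMl ?hnorm_ge0 // ltW.
lra.
Qed.

End Contraction.

Section BoundedOperators.
Implicit Types f g : V -> V.

Lemma linear_op0 f : bounded_op ip f -> f 0 = 0.
Proof.
case=> lin_f _; apply: (@addrI _ (f 0)).
by rewrite -{1}(scale1r (f 0)) -lin_f scaler0 !addr0.
Qed.

Lemma linear_opD f : bounded_op ip f -> forall x y, f (x + y) = f x + f y.
Proof. by case=> lin_f _ x y; rewrite -[x]scale1r lin_f !scale1r. Qed.

Lemma linear_opZ f : bounded_op ip f -> forall a x, f (a *: x) = a *: f x.
Proof.
by move=> hf a x; case: (hf) => lin_f _; rewrite -[a *: x]addr0 lin_f linear_op0 ?addr0.
Qed.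

Lemma linear_opB f : bounded_op ip f -> forall x y, f (x - y) = f x - f y.
Proof. by move=> hf x y; rewrite linear_opD // -scaleN1r linear_opZ // scaleN1r. Qed.

Lemma bounded_op_bound f : bounded_op ip f ->
  exists2 M, 0 <= M & forall x, nrm (f x) <= M * nrm x.
Proof.
case=> _ [M hM]; exists `|M| => // x; apply: le_trans (hM x) _.
by rewrite ler_wpM2r ?hnorm_ge0 ?ler_norm.
Qed.

Lemma bounded_op_id : bounded_op ip (fun x => x).
Proof. by split => //; exists 1 => x; rewrite mul1r. Qed.

Lemma bounded_op_add f g : bounded_op ip f -> bounded_op ip g ->
  bounded_op ip (fun x => f x + g x).
Proof.
move=> hf hg; have [Mf _ bf] := bounded_op_bound hf; have [Mg _ bg] := bounded_op_bound hg.
split=> [a x y|].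
  by rewrite (linear_opD hf) (linear_opD hg) (linear_opZ hf) (linear_opZ hg) scalerDr addrACA.
exists (Mf + Mg) => x; apply: le_trans (hnormD _ _) _.
by rewrite mulrDl lerD.
Qed.

Lemma bounded_op_scale c f : bounded_op ip f -> bounded_op ip (fun x => c *: f x).
Proof.
move=> hf; have [M _ bf] := bounded_op_bound hf.
split=> [a x y|]; first by rewrite (linear_opD hf) (linear_opZ hf) scalerDr !scalerA mulrC.
exists (Normc.normc c * M) => x; rewrite hnormZ -mulrA ler_wpM2l //.
by case: c => a b; apply: sqrtr_ge0.
Qed.

Lemma bounded_op_sub f g : bounded_op ip f -> bounded_op ip g ->
  bounded_op ip (fun x => f x - g x).
Proof.
move=> hf hg; have -> : (fun x => f x - g x) = (fun x => f x + (-1) *: g x).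
  by apply: functional_extensionality => x; rewrite scaleN1r.
by apply: bounded_op_add => //; apply: bounded_op_scale.
Qed.

Lemma bounded_op_comp f g : bounded_op ip f -> bounded_op ip g ->
  bounded_op ip (fun x => f (g x)).
Proof.
move=> hf hg; have [Mf Mf0 bf] := bounded_op_bound hf; have [Mg _ bg] := bounded_op_bound hg.
split=> [a x y|]; last by exists (Mf * Mg) => x; apply: le_trans (bf _) _; rewrite -mulrA ler_wpM2l.
by rewrite (linear_opD hg) (linear_opZ hg) (linear_opD hf) (linear_opZ hf).
Qed.

Lemma is_inverse_op_unique f g h :
  is_inverse_op ip f g -> is_inverse_op ip f h -> forall x, g x = h x.
Proof. by move=> [_ [gf _]] [_ [_ fh]] x; rewrite -[x in g x]fh gf. Qed.

End BoundedOperators.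

Section CoerciveOperator.
Variable B : V -> V.
Hypotheses (hB : bounded_op ip B) (coerB : forall x, hnorm2 x <= Re (ip (B x) x)).

Lemma coercive_hnorm_le x : nrm x <= nrm (B x).
Proof.
have := le_trans (coerB x) (Re_ip_le (B x) x); rewrite -hnorm_sqr.
by have := hnorm_ge0 x; have := hnorm_ge0 (B x); nra.
Qed.

Lemma coercive_injective : injective B.
Proof.
move=> x y Bxy; apply/eqP; rewrite -subr_eq0; apply/eqP/hnorm_eq0/eqP.
rewrite eq_le hnorm_ge0 andbT (le_trans (coercive_hnorm_le _)) //.
by rewrite linear_opB // Bxy subrr hnorm0.
Qed.

Lemma coercive_subZ_contraction (M t : R) : 0 <= t -> t * M ^+ 2 <= 1 ->
  (forall x, nrm (B x) <= M * nrm x) ->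
  forall v, hnorm2 (v - t%:C *: B v) <= (1 - t) * hnorm2 v.
Proof.
move=> t0 tM bB v; rewrite hnorm2_subZ.
have BM : hnorm2 (B v) <= M ^+ 2 * hnorm2 v.
  rewrite -!hnorm_sqr -exprMn ler_pXn2r ?nnegrE ?hnorm_ge0 //.
  exact: le_trans (hnorm_ge0 _) (bB v).
have h1 : t ^+ 2 * hnorm2 (B v) <= t * M ^+ 2 * (t * hnorm2 v).
  rewrite (_ : t * M ^+ 2 * (t * hnorm2 v) = t ^+ 2 * (M ^+ 2 * hnorm2 v)); last by ring.
  by rewrite ler_wpM2l ?sqr_ge0.
have h2 : t * M ^+ 2 * (t * hnorm2 v) <= t * hnorm2 v by rewrite ler_piMl ?mulr_ge0 ?hnorm2_ge0.
have h3 : t * hnorm2 v <= t * Re (ip (B v) v) by rewrite ler_wpM2l.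
lra.
Qed.

Lemma coercive_surjective y : exists x, B x = y.
Proof.
have [M _ bB] := bounded_op_bound hB.
set t := (1 + M ^+ 2)^-1.
have t0 : 0 < t by rewrite invr_gt0 ltr_wpDr ?sqr_ge0.
have tM : t * M ^+ 2 <= 1 by rewrite mulrC ler_pdivrMr ?mul1r ?lerDr // ltr_wpDr ?sqr_ge0.
have t1 : t <= 1 by rewrite invf_le1 ?lerDl ?sqr_ge0 // ltr_wpDr ?sqr_ge0.
pose F x := x - t%:C *: (B x - y).
have [x Fx] : exists x, F x = x.
  apply: (@contraction_fixpoint F (Num.sqrt (1 - t))); first exact: sqrtr_ge0.
    by rewrite -[X in _ < X]sqrtr1 ltr_sqrt ?ltrBlDr ?ltrDl //.
  move=> u w; have -> : F u - F w = (u - w) - t%:C *: B (u - w).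
    rewrite /F !opprD !opprK addrACA; congr (_ + _).
    by rewrite (linear_opB hB u w) addrC -!scalerBr opprB subrKA -scalerN opprB.
  rewrite /hnorm -sqrtrM ?subr_ge0 // ler_sqrt ?mulr_ge0 ?subr_ge0 ?hnorm2_ge0 //.
  exact: coercive_subZ_contraction (ltW t0) tM bB _.
exists x; move/eqP: Fx; rewrite /F subr_eq addrC -subr_eq subrr eq_sym scaler_eq0.
have tC : 0 < t%:C by rewrite ltcE /= eqxx.
by rewrite subr_eq0 (negbTE (lt0r_neq0 tC)) => /eqP.
Qed.

Lemma coercive_inverse :
  exists g, is_inverse_op ip B g /\ forall y, nrm (g y) <= nrm y.
Proof.
pose g y := proj1_sig (constructive_indefinite_description _ (coercive_surjective y)).
have Bg y : B (g y) = y by rewrite /g; case: constructive_indefinite_description.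
have g_le y : nrm (g y) <= nrm y by rewrite -{2}(Bg y) coercive_hnorm_le.
exists g; split=> //; split; last by split=> x; [apply: coercive_injective; rewrite Bg|].
split; last by exists 1 => y; rewrite mul1r.
by move=> a x y; apply: coercive_injective; rewrite (linear_opD hB) (linear_opZ hB) !Bg.
Qed.

End CoerciveOperator.

Section CayleyTransform.
Variables (T Q : V -> V).
Hypotheses (hT : bounded_op ip T) (sT : selfadjoint ip T)
  (hQ : bounded_op ip Q) (pQ : nonneg_op ip Q).

Let D x := x + Q x + 'i%C *: T x.
Let Bw (w : R[i]) x := x + 'i%C *: T x + w *: Q x.

Lemma Re_ip_iT x : Re (ip ('i%C *: T x) x) = 0.
Proof.
rewrite ipZl; have : ip (T x) x = conjc (ip (T x) x) by rewrite -ipC sT.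
by case: (ip (T x) x) => a b /= [b0]; rewrite mul0r mul1r; lra.
Qed.

Lemma Re_ip_scaleQ_ge0 w x : 0 <= Re w -> 0 <= Re (ip (w *: Q x) x).
Proof.
rewrite ipZl; have := pQ x.
case: (ip (Q x) x) => a b; rewrite lecE /= => /andP[/eqP -> a0].
by case: w => c d /= c0; nra.
Qed.

Lemma coercive_IiT x : hnorm2 x <= Re (ip (x + 'i%C *: T x) x).
Proof. by rewrite ipDl raddfD /= Re_ip_iT addr0. Qed.

Lemma coercive_D x : hnorm2 x <= Re (ip (D x) x).
Proof.
rewrite /D addrAC ipDl raddfD /=; apply: le_trans (coercive_IiT x) _.
by rewrite lerDl -[Q x]scale1r Re_ip_scaleQ_ge0.
Qed.

Lemma coercive_Bw w : 0 <= Re w -> forall x, hnorm2 x <= Re (ip (Bw w x) x).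
Proof.
move=> w0 x; rewrite /Bw ipDl raddfD /=; apply: le_trans (coercive_IiT x) _.
by rewrite lerDl Re_ip_scaleQ_ge0.
Qed.

Lemma bounded_op_IiT : bounded_op ip (fun x => x + 'i%C *: T x).
Proof. exact/bounded_op_add/bounded_op_scale/hT/bounded_op_id. Qed.

Lemma bounded_op_D : bounded_op ip D.
Proof. exact/bounded_op_add/bounded_op_scale/hT/bounded_op_add/hQ/bounded_op_id. Qed.

Lemma bounded_op_Bw w : bounded_op ip (Bw w).
Proof. exact/bounded_op_add/bounded_op_scale/hQ/bounded_op_IiT. Qed.

Lemma invertible_IiT : invertible_op ip (fun x => x + 'i%C *: T x).
Proof. by have [g [hg _]] := coercive_inverse bounded_op_IiT coercive_IiT; exists g. Qed.

Lemma invertible_D : invertible_op ip D.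
Proof. by have [g [hg _]] := coercive_inverse bounded_op_D coercive_D; exists g. Qed.

Lemma hnorm_D_le (MT MQ : R) w x : 0 <= MT -> 0 <= MQ ->
  (forall x, nrm (T x) <= MT * nrm x) -> (forall x, nrm (Q x) <= MQ * nrm x) ->
  nrm x <= nrm (Bw w x) -> nrm (D x) <= (3 + MQ + 2 * MT) * nrm (Bw w x).
Proof.
move=> MT0 MQ0 bT bQ; set y := Bw w x => xy.
have ny0 : 0 <= nrm y := hnorm_ge0 _.
have IiTx : nrm (x + 'i%C *: T x) <= (1 + MT) * nrm y.
  apply: le_trans (hnormD _ _) _; rewrite hnormZ /= expr0n expr1n add0r sqrtr1 mul1r.
  by have := bT x; have := ler_wpM2l MT0 xy; lra.
have Qx : nrm (Q x) <= (MQ + 2 + MT) * nrm y.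
  have [w1|w1] := lerP (Normc.normc w) 1.
    by have := bQ x; have := ler_wpM2l MQ0 xy; have := mulr_ge0 MT0 ny0; lra.
  have : nrm (w *: Q x) <= nrm y + (1 + MT) * nrm y.
    have -> : w *: Q x = y - (x + 'i%C *: T x) by rewrite /y /Bw addrC addKr.
    by apply: le_trans (hnormD _ _) _; rewrite hnormN lerD2l.
  rewrite hnormZ => wQ; have := hnorm_ge0 (Q x); have := mulr_ge0 MQ0 ny0; nra.
rewrite /D addrAC; apply: le_trans (hnormD _ _) _; lra.
Qed.

Variable Dinv : V -> V.
Hypothesis hDinv : is_inverse_op ip D Dinv.
Let C x := Dinv x - Q (Dinv x) + 'i%C *: T (Dinv x).

Lemma cayley_subE z w u :
  (z - 1) * w = z + 1 -> z *: u - C u = (z - 1) *: Bw w (Dinv u).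
Proof.
case: hDinv => _ [_ DDinv] zw; rewrite -{1}[u]DDinv /C /D /Bw scale_cayleyE.
by rewrite -zw -scalerA -scalerDr addrAC.
Qed.

Lemma cayley_resolvent_inverse z w G : z != 1 -> (z - 1) * w = z + 1 ->
  is_inverse_op ip (Bw w) G ->
  is_inverse_op ip (fun u => z *: u - C u) (fun v => (z - 1)^-1 *: D (G v)).
Proof.
rewrite -subr_eq0 => z1 zw [hG [GBw BwG]]; case: (hDinv) => hD [DinvD DDinv].
split; first exact/bounded_op_scale/bounded_op_comp/hG/bounded_op_D.
split=> u; rewrite (cayley_subE _ zw).
  by rewrite (linear_opZ hG) GBw (linear_opZ bounded_op_D) DDinv scalerA mulVf ?scale1r.
rewrite (linear_opZ hDinv.1) DinvD (linear_opZ (bounded_op_Bw w)) BwG.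
by rewrite scalerA mulfV ?scale1r.
Qed.

Lemma cayley_resolvent : exists M, forall z, 1 <= Normc.normc z -> z != 1 ->
  exists2 H, is_inverse_op ip (fun u => z *: u - C u) H &
    forall x, nrm ((z - 1) *: H x) <= M * nrm x.
Proof.
have [MT MT0 bT] := bounded_op_bound hT; have [MQ MQ0 bQ] := bounded_op_bound hQ.
exists (3 + MQ + 2 * MT) => z z_ge1 z1.
set w := (z + 1) / (z - 1).
have zw : (z - 1) * w = z + 1 by rewrite mulrCA mulfV ?mulr1 ?subr_eq0.
have [G [hG G_le]] :=
  coercive_inverse (bounded_op_Bw w) (coercive_Bw (Re_divDB_ge0 z_ge1)).
exists (fun v => (z - 1)^-1 *: D (G v)); first exact: cayley_resolvent_inverse z1 zw hG.
move=> x; rewrite scalerA mulfV ?subr_eq0 // scale1r.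
have BwG : Bw w (G x) = x by case: hG => _ [].
by rewrite -{2}BwG hnorm_D_le // BwG G_le.
Qed.

Lemma cayley_ritt : ritt ip C.
Proof.
have [M resolvent] := cayley_resolvent.
split.
  apply: (bounded_op_comp (f := fun y => y - Q y + 'i%C *: T y)) hDinv.1.
  exact/bounded_op_add/bounded_op_scale/hT/bounded_op_sub/hQ/bounded_op_id.
split=> [z /normc_ge1 z_ge1 z1|].
  by have [H hH _] := resolvent z z_ge1 z1; exists H.
exists M => z /normc_gt1 z_gt1 Rz hRz x.
have [H hH H_le] := resolvent z (ltW z_gt1) (normc_gt1_neq1 z_gt1).
by rewrite (is_inverse_op_unique hRz hH).
Qed.

Variable S : V -> V.
Hypothesis hS : is_inverse_op ip (fun x => x + 'i%C *: T x) S.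

Lemma addQSE x : x + Q (S x) = D (S x).
Proof. by case: hS => _ [_ IiTS]; rewrite /D -{1}(IiTS x) addrAC. Qed.

Lemma is_inverse_addQS :
  is_inverse_op ip (fun x => x + Q (S x)) (fun y => Dinv y + 'i%C *: T (Dinv y)).
Proof.
case: (hS) => _ [SIiT IiTS]; case: (hDinv) => hD [DinvD DDinv].
split; first exact: bounded_op_comp bounded_op_IiT hD.
by split=> x; [rewrite addQSE DinvD IiTS | rewrite SIiT addrAC; apply: DDinv].
Qed.

Lemma cayley_eq P : is_inverse_op ip (fun x => x + Q (S x)) P ->
  forall x, P x - Q (S (P x)) = C x.
Proof.
case=> _ [_ addQSP] x; case: (hS) => _ [_ IiTS]; case: (hDinv) => _ [DinvD _].
rewrite /C.
have -> : Dinv x = S (P x) by rewrite -{1}(addQSP x) addQSE DinvD.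
by rewrite -{1}(IiTS (P x)) addrAC.
Qed.

End CayleyTransform.

End InnerProductSpace.

Local Close Scope complex_scope.

Theorem lemma2p4 (R : realType) (V : lmodType R[i]) (ip : V -> V -> R[i])
    (HV : is_hilbert ip) (T Q : V -> V)
    (hT : bounded_op ip T) (sT : selfadjoint ip T)
    (hQ : bounded_op ip Q) (sQ : selfadjoint ip Q) (pQ : nonneg_op ip Q) :
  (* I + iT is invertible, and for its inverse S, with A := Q S : *)
  invertible_op ip (fun x => x + 'i%C *: T x) /\
  forall S : V -> V, is_inverse_op ip (fun x => x + 'i%C *: T x) S ->
    let A := fun x => Q (S x) in
    (* I + A and I + Q + iT are invertible, *)
    invertible_op ip (fun x => x + A x) /\
    invertible_op ip (fun x => x + Q x + 'i%C *: T x) /\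
    forall P P' : V -> V,
      is_inverse_op ip (fun x => x + A x) P ->
      is_inverse_op ip (fun x => x + Q x + 'i%C *: T x) P' ->
      (* the two expressions of the Cayley transform agree, *)
      (forall x, (P x - A (P x)) = (P' x - Q (P' x) + 'i%C *: T (P' x))) /\
      (* and it is a Ritt operator *)
      ritt ip (fun x => P x - A (P x)).
Proof.
(* [sQ] is unused: only [0 <= Re <Qx, x>] enters the argument. *)
split; first exact: invertible_IiT.
move=> S hS A; have [Dinv hDinv] := invertible_D HV hT sT hQ pQ.
split; first exact: ex_intro _ _ (is_inverse_addQS HV hT hDinv hS).
split; first by exists Dinv.
move=> P P' hP hP'; have P'E := is_inverse_op_unique hP' hDinv.
have CE := cayley_eq hDinv hS hP.
split; first by move=> x; rewrite CE /= !P'E.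
rewrite (functional_extensionality _ _ CE).
exact: (cayley_ritt HV hT sT hQ pQ hDinv).
Qed.
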